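(* Let $q$ be a prime power for which there exist $a,b\in\mathbb F_q^*$ and integers $0<m<n<q$ such that $f(x)=ax^m+bx^n$ permutes $\mathbb F_q$. Then, for any generator $w$ of $\mathbb F_q^*$, the group $G(q)$ contains the permutation of $\mathbb F_q^*$ induced by $c\mapsto wc$, and this permutation is a $(q-1)$-cycle.
   Context: $\mathbb F_q$ is the field with $q$ elements, $\mathbb F_q^*$ its multiplicative group. A polynomial permutes $\mathbb F_q$ if the induced map on $\mathbb F_q$ is a bijection. $G(q)$ denotes the group of permutations of $\mathbb F_q^*$ generated by all permutations of $\mathbb F_q^*$ which can be represented as $c\mapsto ac^m+bc^n$ with $a,b\in\mathbb F_q^*$ and integers $0<m<n<q$. *)

From HB Require Import structures.
From mathcomp Require Import all_boot all_order all_algebra all_fingroup all_solvable all_field.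
Set Implicit Arguments. Unset Strict Implicit. Unset Printing Implicit Defensive.
Import GRing.Theory.
Local Open Scope ring_scope.

(* F_q is modelled by an arbitrary finite field F (q = #|F|);
   F_q^* is the unit group {unit F}. *)

Definition binom_perms (F : finFieldType) : {set {perm {unit F}}} :=
  [set s : {perm {unit F}} | [exists a : F, exists b : F,
     exists m : 'I_#|F|, exists n : 'I_#|F|,
       [&& a != 0, b != 0, (0 < m)%N, (m < n)%N &
        [forall c : {unit F},
           val (s c) == a * (val c) ^+ m + b * (val c) ^+ n]]]].

Definition Gq (F : finFieldType) : {set {perm {unit F}}} :=
  <<binom_perms F>>%g.

Definition is_cycle_of_length (T : finType) (k : nat) (s : {perm T}) : Prop :=
  exists x : T, #|porbit s x| = k /\
    (forall y : T, y \notin porbit s x -> s y = y).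

From HB Require Import structures.
From mathcomp Require Import all_boot all_order all_algebra all_fingroup all_solvable all_field.
Set Implicit Arguments. Unset Strict Implicit. Unset Printing Implicit Defensive.
Import GRing.Theory.
Local Open Scope ring_scope.

(* A permutation binomial f gives, by scaling its coefficients, the permutation
   binomial c |-> f (w c).  Both restrict to permutations of F^* (they fix 0), so
   G(q) contains the quotient c |-> w c, a translation of the cyclic group F^*
   by a generator, i.e. a single cycle through all q - 1 points. *)

Definition binom (F : pzRingType) (a b : F) (m n : nat) (x : F) : F :=
  a * x ^+ m + b * x ^+ n.

Lemma binom0 (F : pzRingType) (a b : F) (m n : nat) :
  (0 < m)%N -> (0 < n)%N -> binom a b m n 0 = 0.
Proof. by move=> m_gt0 n_gt0; rewrite /binom !expr0n !eqn0Ngt m_gt0 n_gt0 !mulr0 addr0. Qed.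

Lemma binomM (F : comPzRingType) (a b : F) (m n : nat) (w x : F) :
  binom a b m n (w * x) = binom (a * w ^+ m) (b * w ^+ n) m n x.
Proof. by rewrite /binom !exprMn !mulrA. Qed.

Lemma binom_scale_inj (F : fieldType) (a b w : F) (m n : nat) :
  w != 0 -> injective (binom a b m n) ->
  injective (binom (a * w ^+ m) (b * w ^+ n) m n).
Proof. by move=> w_neq0 f_inj x y; rewrite -!binomM => /f_inj /(mulfI w_neq0). Qed.

Section BinomialPermutation.

Variables (F : finFieldType) (a b : F) (m n : nat).
Hypotheses (m_gt0 : (0 < m)%N) (lt_mn : (m < n)%N).
Hypothesis binom_inj : injective (binom a b m n).

Lemma binom_unit (c : {unit F}) : binom a b m n (val c) \is a GRing.unit.
Proof.
have f0 : binom a b m n 0 = 0 by rewrite binom0 // (ltn_trans m_gt0 lt_mn).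
rewrite unitfE; apply: contraTneq (valP c) => fc0.
by rewrite (binom_inj (etrans fc0 (esym f0))) unitfE eqxx.
Qed.

Definition binom_unit_map (c : {unit F}) : {unit F} :=
  Sub (binom a b m n (val c)) (binom_unit c).

Lemma binom_unit_map_inj : injective binom_unit_map.
Proof. by move=> x y /(congr1 val) /binom_inj /val_inj. Qed.

Definition binom_perm : {perm {unit F}} := perm binom_unit_map_inj.

Lemma binom_permE (c : {unit F}) : val (binom_perm c) = binom a b m n (val c).
Proof. by rewrite permE. Qed.

Lemma binom_perm_in :
  a != 0 -> b != 0 -> (n < #|F|)%N -> binom_perm \in binom_perms F.
Proof.
move=> a_neq0 b_neq0 n_lt_q; rewrite inE.
apply/existsP; exists a; apply/existsP; exists b.
apply/existsP; exists (Ordinal (ltn_trans lt_mn n_lt_q)).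
apply/existsP; exists (Ordinal n_lt_q).
by rewrite a_neq0 b_neq0 m_gt0 lt_mn; apply/forallP => c; rewrite binom_permE.
Qed.

End BinomialPermutation.

Definition lmul_perm (gT : finGroupType) (w : gT) : {perm gT} := perm (mulgI w).

Lemma lmul_permE (gT : finGroupType) (w x : gT) : lmul_perm w x = (w * x)%g.
Proof. by rewrite permE. Qed.

Lemma lmul_permX (gT : finGroupType) (w x : gT) (k : nat) :
  (lmul_perm w ^+ k)%g x = (w ^+ k * x)%g.
Proof.
elim: k => [|k IHk]; first by rewrite !expg0 perm1 mul1g.
by rewrite expgSr permM IHk lmul_permE expgS mulgA.
Qed.

Lemma lmul_perm_cycle (gT : finGroupType) (w : gT) :
  generator [set: gT] w -> is_cycle_of_length #|gT| (lmul_perm w).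
Proof.
move=> w_gen; exists 1%g.
have orbit1 : porbit (lmul_perm w) 1%g = [set: gT].
  apply/setP => y; rewrite inE; apply/porbitP.
  have : y \in <[w]>%g by rewrite -(eqP w_gen) inE.
  by case/cycleP => k ->; exists k; rewrite lmul_permX mulg1.
by rewrite orbit1 cardsT; split=> // y; rewrite inE.
Qed.

Lemma lmul_perm_binom (F : finFieldType) (a b : F) (m n : nat)
    (m_gt0 : (0 < m)%N) (lt_mn : (m < n)%N) (w : {unit F})
    (f_inj : injective (binom a b m n))
    (fw_inj : injective (binom (a * val w ^+ m) (b * val w ^+ n) m n)) :
  lmul_perm w = (binom_perm m_gt0 lt_mn fw_inj * (binom_perm m_gt0 lt_mn f_inj)^-1)%g.
Proof.
apply/permP => c; apply: (perm_inj (s := binom_perm m_gt0 lt_mn f_inj)).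
by rewrite permM permKV; apply: val_inj; rewrite !binom_permE lmul_permE binomM.
Qed.

Theorem lemma4p1 (F : finFieldType)
  (hperm : exists (a b : F) (m n : nat),
      [/\ a != 0, b != 0, (0 < m < n)%N, (n < #|F|)%N &
          bijective (fun x : F => a * x ^+ m + b * x ^+ n)])
  (w : {unit F}) (hw : generator [set: {unit F}] w) :
  exists s : {perm {unit F}},
    [/\ s \in Gq F,
        (forall c : {unit F}, s c = (w * c)%g) &
        is_cycle_of_length (#|F| - 1)%N s].
Proof.
case: hperm => a [b [m [n [a_neq0 b_neq0 /andP[m_gt0 lt_mn] n_lt_q /bij_inj f_inj]]]].
have w_neq0 : val w != 0 by rewrite -unitfE (valP w).
have fw_inj := binom_scale_inj w_neq0 f_inj.
exists (lmul_perm w); split.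
- rewrite (lmul_perm_binom m_gt0 lt_mn f_inj fw_inj) groupM ?groupV ?mem_gen //.
    by rewrite binom_perm_in // mulf_neq0 // expf_neq0.
  exact: binom_perm_in.
- exact: lmul_permE.
- by rewrite subn1 -card_finField_unit cardsT; exact: lmul_perm_cycle.
Qed.
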